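(* Consider a cellular network with $n$ base stations $\mathcal{N}=\{1,\dots,n\}$, base station $i$ serving a nonempty set $\mathcal{J}_i$ of users (pairwise disjoint), channel gains $g_{kj}>0$ and noise power $\sigma^2>0$. Let a load vector $\mathbf{x}>\mathbf{0}$ and a rate vector $\mathbf{r}>\mathbf{0}$ be given. For $\mathbf{p}\in\mathbb{R}^n_+$ and each $i$, let $h_i(\bar{\mathbf{p}}_i;\mathbf{x},\mathbf{r})$ be the unique $p_i>0$ satisfying $$1=\sum_{j\in\mathcal{J}_i}\frac{r_{ij}/x_i}{\log\Big(1+p_i\,\frac{g_{ij}}{\sum_{k\ne i}p_kg_{kj}x_k+\sigma^2}\Big)},$$ and let $\mathbf{h}(\mathbf{p};\mathbf{x},\mathbf{r})=(h_1(\bar{\mathbf{p}}_1;\mathbf{x},\mathbf{r}),\dots,h_n(\bar{\mathbf{p}}_n;\mathbf{x},\mathbf{r}))^T$. Then $\mathbf{p}\mapsto\mathbf{h}(\mathbf{p};\mathbf{x},\mathbf{r})$ is a standard interference function.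
   Context: $\log$ is natural logarithm; vector inequalities are componentwise; $\bar{\mathbf{p}}_i$ denotes $\mathbf{p}$ with its $i$th component removed. A function $\mathbf{I}:\mathbb{R}^n_+\to\mathbb{R}^n_+$ is a standard interference function if for all $\mathbf{p}\ge\mathbf{0}$: (positivity) $\mathbf{I}(\mathbf{p})>\mathbf{0}$; (monotonicity) $\mathbf{p}\ge\mathbf{p}'$ implies $\mathbf{I}(\mathbf{p})\ge\mathbf{I}(\mathbf{p}')$; (scalability) for every $\alpha>1$, $\alpha\mathbf{I}(\mathbf{p})>\mathbf{I}(\alpha\mathbf{p})$. *)

From HB Require Import structures.
From mathcomp Require Import all_boot all_order all_algebra.
From mathcomp Require Import boolp classical_sets reals exp.
Set Implicit Arguments. Unset Strict Implicit. Unset Printing Implicit Defensive.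
Import Order.TTheory GRing.Theory Num.Theory.
Local Open Scope ring_scope.

(* Stations are 'I_n, users are 'I_m; serv j is the station serving user j,
   so J_i = [set j | serv j = i] (these sets are pairwise disjoint). *)

Section Defs.
Variables (R : realType) (n m : nat).

Definition interf (g : 'I_n -> 'I_m -> R) (sigma2 : R) (x : 'I_n -> R)
  (p : 'I_n -> R) (i : 'I_n) (j : 'I_m) : R :=
  \sum_(k < n | k != i) p k * g k j * x k + sigma2.

(* right-hand side of the defining equation, as a function of p_i = q *)
Definition load_eq (serv : 'I_m -> 'I_n) (g : 'I_n -> 'I_m -> R) (sigma2 : R)
  (x : 'I_n -> R) (r : 'I_m -> R) (p : 'I_n -> R) (i : 'I_n) (q : R) : R :=
  \sum_(j < m | serv j == i)
     (r j / x i) / ln (1 + q * (g i j / interf g sigma2 x p i j)).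

Definition h_i serv g sigma2 x r (p : 'I_n -> R) (i : 'I_n) : R :=
  xget 0 [set q : R | 0 < q /\ 1 = load_eq serv g sigma2 x r p i q].

Definition h_vec serv g sigma2 x r : ('I_n -> R) -> ('I_n -> R) :=
  fun p i => h_i serv g sigma2 x r p i.

Definition standard_interference (I : ('I_n -> R) -> ('I_n -> R)) : Prop :=
  (forall p, (forall k, 0 <= p k) -> forall i, 0 < I p i) /\
  (forall p p', (forall k, 0 <= p' k) -> (forall k, p' k <= p k) ->
     forall i, I p' i <= I p i) /\
  (forall p, (forall k, 0 <= p k) -> forall alpha : R, 1 < alpha ->
     forall i, I (fun k => alpha * p k) i < alpha * I p i).

End Defs.

From HB Require Import structures.
From mathcomp Require Import all_boot all_order all_algebra.
From mathcomp Require Import classical_sets reals topology normedtype sequences exp.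
Import Order.TTheory GRing.Theory Num.Theory.
Import numFieldNormedType.Exports.
Set Implicit Arguments. Unset Strict Implicit. Unset Printing Implicit Defensive.
Local Open Scope ring_scope.

(* The defining equation of h_i reads F(q a) = 1 with
   F(a) = sum_j c_j / ln(1 + a_j), which is strictly decreasing in every a_j,
   and a_j = g_ij / I_ij(p) the gain of user j against the interference I_ij(p).
   A root exists by the intermediate value theorem.  Comparing two roots q, q'
   for gain vectors a <= t a' gives q' <= t q (strictly if a < t a'), since
   otherwise every argument q a_j < q' a'_j and F could not take the value 1 at
   both.  Raising p lowers the gains (t = 1), while scaling p by alpha > 1 gives
   gains a' with a < alpha a', because I(alpha p) < alpha I(p) thanks to the
   noise. *)

Lemma ltr_div_ln1D (R : realType) (c u v : R) : 0 < c -> 0 < u -> u < v ->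
  c / ln (1 + v) < c / ln (1 + u).
Proof.
move=> c0 u0 uv; have v0 := lt_trans u0 uv.
have pos w : 0 < w -> 1 < 1 + w by rewrite ltrDl.
rewrite ltr_pM2l // ltf_pV2 ?posrE ?ln_gt0 ?pos //.
by rewrite ltr_ln ?posrE ?ltrD2l // (lt_trans ltr01) ?pos.
Qed.

Section LogLoad.
Variables (R : realType) (m : nat) (P : pred 'I_m) (c : 'I_m -> R).
Hypotheses (P_nonempty : exists j, P j) (c_gt0 : forall j, 0 < c j).

Definition log_load (a : 'I_m -> R) (q : R) : R :=
  \sum_(j < m | P j) c j / ln (1 + q * a j).

Lemma log_load_continuous (a : 'I_m -> R) (q : R) :
  (forall j, 0 < a j) -> 0 < q -> {for q, continuous (log_load a)}.
Proof.
move=> a0 q0; apply: cvg_big => [|j _]; first exact: add_continuous.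
suff : {for q, continuous (fun t : R => c j / ln (1 + t * a j))} by [].
have qa1 : 1 < 1 + q * a j by rewrite ltrDl mulr_gt0.
apply: continuousM; first exact: cvg_cst.
apply: continuousV; first by rewrite gt_eqF // ln_gt0.
apply: (@continuous_comp _ _ _ (fun t : R => 1 + t * a j)).
  apply: continuousD; first exact: cvg_cst.
  by apply: continuousM; [exact: cvg_id | exact: cvg_cst].
by apply: continuous_ln; rewrite (lt_trans ltr01).
Qed.

Lemma log_load_lt (a a' : 'I_m -> R) (q q' : R) :
  (forall j, P j -> 0 < q * a j < q' * a' j) -> log_load a' q' < log_load a q.
Proof.
move=> H; have [j0 Pj0] := P_nonempty.
apply: ltr_sum; first by apply/hasP; exists j0; rewrite ?mem_index_enum.
by move=> j /H /andP[u0 uv]; exact: ltr_div_ln1D.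
Qed.

Lemma log_load_ge1 (a : 'I_m -> R) (j0 : 'I_m) :
  (forall j, 0 < a j) -> P j0 -> 1 <= log_load a (c j0 / a j0).
Proof.
move=> a0 Pj0; rewrite /log_load (bigD1 j0) //= divfK ?gt_eqF //.
have c1 : 1 < 1 + c j0 by rewrite ltrDl.
rewrite -[X in X <= _]addr0 lerD //.
  by rewrite ler_pdivlMr ?ln_gt0 // mul1r le_ln1Dx // (lt_trans (ltrN10 R)).
apply: sumr_ge0 => j _; apply: divr_ge0; first exact: ltW.
by apply: ln_ge0; rewrite lerDl mulr_ge0 // ltW ?divr_gt0.
Qed.

Lemma log_load_le1 (a : 'I_m -> R) (q : R) :
  (forall j, 0 < a j) ->
  expR (\sum_(j < m | P j) c j) * \sum_(j < m) (a j)^-1 <= q -> log_load a q <= 1.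
Proof.
move=> a0; set K := \sum_(j < m | P j) c j => le_q.
have K0 : 0 < K.
  have [j0 Pj0] := P_nonempty; rewrite /K (bigD1 j0) //= ltr_pwDl //.
  by apply: sumr_ge0 => j _; exact: ltW.
have ln_ge j : K <= ln (1 + q * a j).
  have expK_le : expR K <= q * a j.
    rewrite -ler_pdivrMr // (le_trans _ le_q) // ler_pM2l ?expR_gt0 //.
    by rewrite (bigD1 j) //= lerDl sumr_ge0 // => k _; rewrite invr_ge0 ltW.
  have qa0 : 0 < q * a j := lt_le_trans (expR_gt0 K) expK_le.
  rewrite -[K]expRK ler_ln ?posrE ?expR_gt0 ?addr_gt0 //.
  by rewrite (le_trans expK_le) // lerDr.
apply: (@le_trans _ _ (\sum_(j < m | P j) c j / K)).
  by apply: ler_sum => j _; rewrite ler_pM2l // lef_pV2 ?posrE ?(lt_le_trans K0).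
by rewrite -mulr_suml divff ?gt_eqF.
Qed.

Lemma log_load_root_exists (a : 'I_m -> R) :
  (forall j, 0 < a j) -> exists2 q, 0 < q & log_load a q = 1.
Proof.
move=> a0; have [j0 Pj0] := P_nonempty.
set lo := c j0 / a j0.
set big := expR (\sum_(j < m | P j) c j) * \sum_(j < m) (a j)^-1.
have lo0 : 0 < lo by rewrite divr_gt0.
have big0 : 0 <= big.
  by rewrite mulr_ge0 ?expR_ge0 // sumr_ge0 // => j _; rewrite invr_ge0 ltW.
have lo_le : lo <= lo + big by rewrite lerDl.
have cont : {within `[lo, lo + big], continuous (log_load a)}%classic.
  apply: continuous_in_subspaceT => t; rewrite inE /= in_itv /= => /andP[lo_t _].
  exact/log_load_continuous/(lt_le_trans lo0).
have bounds : Num.min (log_load a lo) (log_load a (lo + big)) <= 1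
               <= Num.max (log_load a lo) (log_load a (lo + big)).
  apply/andP; split.
    by rewrite ge_min (@log_load_le1 a (lo + big) a0) ?orbT // -/big lerDr ltW.
  by rewrite le_max (@log_load_ge1 a j0 a0 Pj0).
have [q] := IVT lo_le cont bounds.
by rewrite in_itv /= => /andP[lo_q _] root_q; exists q; first exact: lt_le_trans lo_q.
Qed.

Section Roots.
Variables (a a' : 'I_m -> R) (q q' t : R).
Hypotheses (a_gt0 : forall j, 0 < a j) (a'_gt0 : forall j, 0 < a' j).
Hypotheses (q_gt0 : 0 < q) (root_q : log_load a q = 1) (root_q' : log_load a' q' = 1).

Lemma log_load_root_le : (forall j, a j <= t * a' j) -> q' <= t * q.
Proof.
move=> le_a; rewrite leNgt; apply/negP => lt_q.
suff : log_load a' q' < log_load a q by rewrite root_q root_q' ltxx.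
apply: log_load_lt => j _; rewrite mulr_gt0 //=.
by rewrite (@le_lt_trans _ _ (q * (t * a' j))) ?ler_pM2l // mulrA ltr_pM2r // mulrC.
Qed.

Lemma log_load_root_lt : (forall j, a j < t * a' j) -> q' < t * q.
Proof.
move=> lt_a; rewrite ltNge; apply/negP => le_q.
suff : log_load a' q' < log_load a q by rewrite root_q root_q' ltxx.
apply: log_load_lt => j _; rewrite mulr_gt0 //=.
by rewrite (@lt_le_trans _ _ (q * (t * a' j))) ?ltr_pM2l // mulrA ler_pM2r // mulrC.
Qed.

End Roots.
End LogLoad.

Section Network.
Variables (R : realType) (n m : nat) (serv : 'I_m -> 'I_n)
  (g : 'I_n -> 'I_m -> R) (sigma2 : R) (x : 'I_n -> R) (r : 'I_m -> R).
Hypotheses (serv_surj : forall i, exists j, serv j = i)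
  (g_gt0 : forall k j, 0 < g k j) (sigma2_gt0 : 0 < sigma2)
  (x_gt0 : forall i, 0 < x i) (r_gt0 : forall j, 0 < r j).

Local Notation I := (interf g sigma2 x).
Local Notation h := (h_vec serv g sigma2 x r).
Local Notation load i := (log_load (fun j => serv j == i) (fun j => r j / x i)).

Definition gain (p : 'I_n -> R) (i : 'I_n) (j : 'I_m) : R := g i j / I p i j.

Lemma interf_gt0 p i j : (forall k, 0 <= p k) -> 0 < I p i j.
Proof.
move=> p0; rewrite /interf ltr_wpDl // sumr_ge0 // => k _.
by rewrite !mulr_ge0 // ltW.
Qed.

Lemma interf_le p p' i j : (forall k, p' k <= p k) -> I p' i j <= I p i j.
Proof.
move=> le_p; rewrite /interf lerD2r; apply: ler_sum => k _.
by rewrite ler_pM2r ?x_gt0 // ler_pM2r ?g_gt0.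
Qed.

Lemma interf_scale p i j alpha : 1 < alpha ->
  I (fun k => alpha * p k) i j < alpha * I p i j.
Proof.
move=> alpha1; rewrite /interf mulrDr mulr_sumr ler_ltD ?ltr_pMl //.
by apply: ler_sum => k _; rewrite !mulrA.
Qed.

Lemma gain_gt0 p i j : (forall k, 0 <= p k) -> 0 < gain p i j.
Proof. by move=> p0; rewrite divr_gt0 ?interf_gt0. Qed.

Lemma gain_le p p' i j : (forall k, 0 <= p' k) -> (forall k, p' k <= p k) ->
  gain p i j <= gain p' i j.
Proof.
move=> p'0 le_p; have p0 k := le_trans (p'0 k) (le_p k).
by rewrite ler_pM2l ?g_gt0 // lef_pV2 ?posrE ?interf_gt0 ?interf_le.
Qed.

Lemma gain_scale p i j alpha : (forall k, 0 <= p k) -> 1 < alpha ->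
  gain p i j < alpha * gain (fun k => alpha * p k) i j.
Proof.
move=> p0 alpha1; have alpha0 : 0 < alpha := lt_trans ltr01 alpha1.
have pa0 k : 0 <= alpha * p k by rewrite mulr_ge0 // ltW.
rewrite /gain mulrCA ltr_pM2l ?g_gt0 // ltr_pdivlMr ?interf_gt0 //.
by rewrite mulrC ltr_pdivrMr ?interf_gt0 ?interf_scale.
Qed.

Lemma load_eqE p i q : load_eq serv g sigma2 x r p i q = load i (gain p i) q.
Proof. by []. Qed.

Lemma served_nonempty i : exists j, serv j == i.
Proof. by have [j serv_j] := serv_surj i; exists j; rewrite serv_j. Qed.

Lemma rate_gt0 i j : 0 < r j / x i.
Proof. by rewrite divr_gt0. Qed.

Lemma h_vec_root p i : (forall k, 0 <= p k) ->
  0 < h p i /\ load i (gain p i) (h p i) = 1.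
Proof.
move=> p0; have [q q0 root_q] :=
  log_load_root_exists (served_nonempty i) (rate_gt0 i) (gain_gt0 i ^~ p0).
have ex_root :
    exists q, [set q | 0 < q /\ 1 = load_eq serv g sigma2 x r p i q]%classic q.
  by exists q; rewrite /= load_eqE root_q.
have [h0 root_h] := xgetPex 0 ex_root.
by split; last rewrite -load_eqE root_h.
Qed.

Lemma h_vec_monotone p p' i : (forall k, 0 <= p' k) -> (forall k, p' k <= p k) ->
  h p' i <= h p i.
Proof.
move=> p'0 le_p; have p0 k := le_trans (p'0 k) (le_p k).
have [h0 root] := h_vec_root i p0; have [_ root'] := h_vec_root i p'0.
rewrite -[h p i]mul1r; apply: (log_load_root_le (served_nonempty i) (rate_gt0 i)
  (gain_gt0 i ^~ p0) (gain_gt0 i ^~ p'0) h0 root root') => j.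
by rewrite mul1r gain_le.
Qed.

Lemma h_vec_scalable p alpha i : (forall k, 0 <= p k) -> 1 < alpha ->
  h (fun k => alpha * p k) i < alpha * h p i.
Proof.
move=> p0 alpha1; have pa0 k : 0 <= alpha * p k.
  by rewrite mulr_ge0 // ltW // (lt_trans ltr01).
have [h0 root] := h_vec_root i p0; have [_ root'] := h_vec_root i pa0.
apply: (log_load_root_lt (served_nonempty i) (rate_gt0 i)
  (gain_gt0 i ^~ p0) (gain_gt0 i ^~ pa0) h0 root root') => j.
exact: gain_scale.
Qed.
End Network.

Theorem lemma5 (R : realType) (n m : nat) (serv : 'I_m -> 'I_n)
  (g : 'I_n -> 'I_m -> R) (sigma2 : R) (x : 'I_n -> R) (r : 'I_m -> R) :
  (forall i : 'I_n, exists j : 'I_m, serv j = i) ->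
  (forall k j, 0 < g k j) ->
  0 < sigma2 ->
  (forall i, 0 < x i) ->
  (forall j, 0 < r j) ->
  standard_interference (h_vec serv g sigma2 x r).
Proof.
move=> serv_surj g_gt0 sigma2_gt0 x_gt0 r_gt0; split; [|split].
- by move=> p p0 i; case: (h_vec_root serv_surj g_gt0 sigma2_gt0 x_gt0 r_gt0 i p0).
- by move=> p p' p'0 le_p i; exact: h_vec_monotone.
- by move=> p p0 alpha alpha1 i; exact: h_vec_scalable.
Qed.
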